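(* Let $m_A=0.307394561088771942$, $M_A=0.307396653842409774$, $m_B=0.451388989838190632$, $M_B=0.451676307610047724$. Let $(x_n)_{n\ge0}$ and $(s_n)_{n\ge0}$ be sequences of positive reals such that for every $n$: if $x_n\ge s_n$ (an ''A-burst'' at step $n$), then $x_{n+1}\in[m_Ax_n,M_Ax_n]$ and $s_{n+1}=s_n$; if $x_n<s_n$ (a ''B-burst'' at step $n$), then $s_{n+1}\in[m_Bs_n,M_Bs_n]$ and $x_{n+1}=x_n$. Let $r_n=x_n/s_n$. Then for all sufficiently large $n$, $r_n\in[m_A,1/m_B]$, and moreover (i) every maximal run of consecutive A-bursts eventually has length exactly $1$; (ii) every maximal run of consecutive B-bursts eventually has length at most $2$. Consequently, eventually every block of three consecutive steps contains at least one A-burst and at least one B-burst, and $x_n+s_n\to0$.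
   Context: This is the burst-ratio dynamics of AdaBoost on a product of two gadgets: $x_n$ and $s_n$ are the principal (dominant-eigendirection) coordinates of the two gadgets at the $n$th burst boundary, the A-gadget wins burst $n$ exactly when $x_n\ge s_n$ (ties to A), and a winning gadget's coordinate contracts by a factor in the stated interval while the other is unchanged. *)

From Stdlib Require Import Reals Lra.
Open Scope R_scope.

Definition mA : R := 0.307394561088771942.
Definition MA : R := 0.307396653842409774.
Definition mB : R := 0.451388989838190632.
Definition MB : R := 0.451676307610047724.

Definition A_burst (x s : nat -> R) (n : nat) : Prop := s n <= x n.
Definition B_burst (x s : nat -> R) (n : nat) : Prop := x n < s n.

Definition burst_dynamics (x s : nat -> R) : Prop :=
  (forall n, 0 < x n /\ 0 < s n) /\
  (forall n, A_burst x s n ->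
     mA * x n <= x (S n) <= MA * x n /\ s (S n) = s n) /\
  (forall n, B_burst x s n ->
     mB * s n <= s (S n) <= MB * s n /\ x (S n) = x n).

(** Write [r = x/s]. An A-burst needs [r >= 1] and multiplies [r] by at most
    [MA < mB]; a B-burst needs [r < 1] and multiplies [r] by at least [1/MB].
    Since neither coordinate can contract forever while the other one is
    frozen, a switch from a B-burst to an A-burst occurs, and at that moment
    [r] already lies in the interval [[mA, 1/mB]], which is invariant.
    Inside it an A-burst drops [r] below [MA/mB < 1], and two B-bursts raise
    it above [mA/MB^2 >= 1]. So every three consecutive bursts contract both
    coordinates, and [x + s] decays geometrically. *)

From Stdlib Require Import Reals Lra Lia Classical.
Open Scope R_scope.

Lemma geometric_decay (u : nat -> R) (q : R) (N p : nat) :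
  0 <= q -> (forall n, (N <= n)%nat -> u (n + p)%nat <= q * u n) ->
  forall k, u (N + k * p)%nat <= q ^ k * u N.
Proof.
  intros q_nonneg contract k; induction k as [|k IHk]; simpl.
  - rewrite Nat.add_0_r; lra.
  - replace (N + (p + k * p))%nat with (N + k * p + p)%nat by lia.
    specialize (contract (N + k * p)%nat ltac:(lia)).
    apply Rmult_le_compat_l with (r := q) in IHk; lra.
Qed.

Lemma pow_mul_eventually_lt (q y eps : R) :
  0 <= q < 1 -> 0 <= y -> 0 < eps -> exists k, q ^ k * y < eps.
Proof.
  intros q_bounds y_nonneg eps_pos.
  destruct (pow_lt_1_zero q ltac:(rewrite Rabs_right; lra) (eps / (y + 1)))
    as [k small]; [apply Rdiv_lt_0_compat; lra|].
  exists k; specialize (small k (le_n k)).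
  rewrite Rabs_right in small by (apply Rle_ge, pow_le; lra).
  apply (Rmult_lt_compat_r (y + 1)) in small; [|lra].
  unfold Rdiv in small; rewrite Rmult_assoc, Rinv_l in small by lra.
  pose proof (pow_le q k (proj1 q_bounds)); nra.
Qed.

Lemma contraction_not_bounded_below (u : nat -> R) (q c : R) (N : nat) :
  0 <= q < 1 -> 0 < c ->
  ~ (forall n, (N <= n)%nat -> c <= u n /\ u (S n) <= q * u n).
Proof.
  intros q_bounds c_pos bounded.
  assert (uN_nonneg : 0 <= u N) by (destruct (bounded N (le_n N)); lra).
  destruct (pow_mul_eventually_lt q (u N) c q_bounds uN_nonneg c_pos) as [k small].
  assert (decay : u (N + k * 1)%nat <= q ^ k * u N).
  { apply geometric_decay; [lra|].
    intros n Nn; rewrite Nat.add_1_r; apply (bounded n Nn). }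
  destruct (bounded (N + k * 1)%nat ltac:(lia)); lra.
Qed.

Lemma Un_cv_0_of_eventual_contraction (u : nat -> R) (q : R) (N p : nat) :
  0 <= q < 1 -> (forall n, 0 <= u n) -> Un_decreasing u ->
  (forall n, (N <= n)%nat -> u (n + p)%nat <= q * u n) ->
  Un_cv u 0.
Proof.
  intros q_bounds u_nonneg u_decr contract eps eps_pos.
  destruct (pow_mul_eventually_lt q (u N) eps q_bounds (u_nonneg N) eps_pos)
    as [k small].
  exists (N + k * p)%nat; intros n n_large.
  pose proof (decreasing_prop u _ _ u_decr n_large).
  pose proof (geometric_decay u q N p (proj1 q_bounds) contract k).
  unfold Rdist; rewrite Rminus_0_r, Rabs_right by (apply Rle_ge, u_nonneg).
  lra.
Qed.

Lemma exists_switch (P : nat -> Prop) (n0 n1 : nat) :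
  (forall n, P n \/ ~ P n) -> (n0 <= n1)%nat -> ~ P n0 -> P n1 ->
  exists m, ~ P m /\ P (S m).
Proof.
  intros P_dec le01 not_P0.
  induction le01 as [|k le0k IH]; intros P_Sk; [contradiction|].
  destruct (P_dec k) as [P_k|not_P_k]; [exact (IH P_k)|].
  exists k; auto.
Qed.

Definition admissible_rates (a A b B : R) : Prop :=
  B * B <= a /\ a <= A /\ A < b /\ b <= B /\ B < 1.

Lemma paper_rates_admissible : admissible_rates mA MA mB MB.
Proof. unfold admissible_rates, mA, MA, mB, MB; repeat split; lra. Qed.

Section Bursts.

Context {a A b B : R} (rates : admissible_rates a A b B).
Context {x s : nat -> R} (pos : forall n, 0 < x n /\ 0 < s n).
Context (A_step : forall n, A_burst x s n ->
           a * x n <= x (S n) <= A * x n /\ s (S n) = s n).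
Context (B_step : forall n, B_burst x s n ->
           b * s n <= s (S n) <= B * s n /\ x (S n) = x n).

Lemma rates_bounds : 0 <= a /\ a <= A /\ A < b /\ b <= B /\ B < 1.
Proof. destruct rates as (? & ? & ? & ? & ?); repeat split; nra. Qed.

Definition trapped (n : nat) : Prop := a * s n <= x n /\ b * x n <= s n.

Lemma burst_cases n : A_burst x s n \/ B_burst x s n.
Proof. unfold A_burst, B_burst; destruct (Rle_lt_dec (s n) (x n)); auto. Qed.

Lemma B_burst_iff_not_A n : B_burst x s n <-> ~ A_burst x s n.
Proof. unfold A_burst, B_burst; split; [lra | apply Rnot_le_lt]. Qed.

Lemma x_decreasing : Un_decreasing x.
Proof.
  intro n; destruct rates_bounds as (? & ? & ? & ? & ?); destruct (pos n).
  destruct (burst_cases n) as [h | h].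
  - destruct (A_step n h) as [[? ?] _]; nra.
  - destruct (B_step n h) as [_ ->]; lra.
Qed.

Lemma s_decreasing : Un_decreasing s.
Proof.
  intro n; destruct rates_bounds as (? & ? & ? & ? & ?); destruct (pos n).
  destruct (burst_cases n) as [h | h].
  - destruct (A_step n h) as [_ ->]; lra.
  - destruct (B_step n h) as [[? ?] _]; nra.
Qed.

Lemma x_contracts_after_A_burst n k m :
  (n <= k)%nat -> (k < m)%nat -> A_burst x s k -> x m <= A * x n.
Proof.
  intros nk km h; destruct rates_bounds as (? & ? & ? & ? & ?).
  pose proof (decreasing_prop x _ _ x_decreasing km).
  pose proof (decreasing_prop x _ _ x_decreasing nk).
  destruct (A_step k h) as [[? ?] _]; destruct (pos k); nra.
Qed.

Lemma s_contracts_after_B_burst n k m :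
  (n <= k)%nat -> (k < m)%nat -> B_burst x s k -> s m <= B * s n.
Proof.
  intros nk km h; destruct rates_bounds as (? & ? & ? & ? & ?).
  pose proof (decreasing_prop s _ _ s_decreasing km).
  pose proof (decreasing_prop s _ _ s_decreasing nk).
  destruct (B_step k h) as [[? ?] _]; destruct (pos k); nra.
Qed.

Lemma B_burst_infinitely_often N : exists n, (N <= n)%nat /\ B_burst x s n.
Proof.
  apply NNPP; intro no_B.
  assert (all_A : forall n, (N <= n)%nat -> A_burst x s n).
  { intros n Nn; destruct (burst_cases n) as [h | h]; auto.
    exfalso; eauto. }
  assert (s_frozen : forall n, (N <= n)%nat -> s n = s N).
  { intros n Nn; induction Nn as [|n Nn IH]; auto.
    destruct (A_step n (all_A n Nn)) as [_ ->]; exact IH. }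
  destruct rates_bounds as (? & ? & ? & ? & ?).
  apply (contraction_not_bounded_below x A (s N) N); [lra | apply pos |].
  intros n Nn; pose proof (all_A n Nn) as h; split.
  - rewrite <- (s_frozen n Nn); exact h.
  - destruct (A_step n h) as [[? ?] _]; lra.
Qed.

Lemma A_burst_infinitely_often N : exists n, (N <= n)%nat /\ A_burst x s n.
Proof.
  apply NNPP; intro no_A.
  assert (all_B : forall n, (N <= n)%nat -> B_burst x s n).
  { intros n Nn; destruct (burst_cases n) as [h | h]; auto.
    exfalso; eauto. }
  assert (x_frozen : forall n, (N <= n)%nat -> x n = x N).
  { intros n Nn; induction Nn as [|n Nn IH]; auto.
    destruct (B_step n (all_B n Nn)) as [_ ->]; exact IH. }
  destruct rates_bounds as (? & ? & ? & ? & ?).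
  apply (contraction_not_bounded_below s B (x N) N); [lra | apply pos |].
  intros n Nn; pose proof (all_B n Nn) as h; split.
  - rewrite <- (x_frozen n Nn); unfold B_burst in h; lra.
  - destruct (B_step n h) as [[? ?] _]; lra.
Qed.

Lemma trapped_after_switch_to_A n :
  B_burst x s n -> A_burst x s (S n) -> trapped (S n).
Proof.
  unfold trapped, A_burst, B_burst; intros hB hA.
  destruct rates_bounds as (? & ? & ? & ? & ?); destruct (pos n); destruct (pos (S n)).
  destruct (B_step n hB) as [[? ?] x_eq]; rewrite x_eq in *.
  split; nra.
Qed.

Lemma trapped_step n : trapped n -> trapped (S n).
Proof.
  unfold trapped; intros [lo hi].
  destruct rates_bounds as (? & ? & ? & ? & ?); destruct (pos n).
  destruct (burst_cases n) as [h | h]; unfold A_burst, B_burst in h.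
  - destruct (A_step n h) as [[? ?] ->]; split; nra.
  - destruct (B_step n h) as [[? ?] ->]; split; nra.
Qed.

Lemma eventually_trapped : exists N, forall n, (N <= n)%nat -> trapped n.
Proof.
  destruct (B_burst_infinitely_often 0) as [n0 [_ hB]].
  destruct (A_burst_infinitely_often n0) as [n1 [le01 hA]].
  destruct (exists_switch (A_burst x s) n0 n1) as [m [not_A A_next]]; auto.
  - intro n; destruct (burst_cases n) as [h | h]; [left | right]; auto.
    now apply B_burst_iff_not_A.
  - now apply B_burst_iff_not_A.
  - exists (S m); intros n mn; induction mn as [|n mn IH].
    + apply trapped_after_switch_to_A; auto.
      now apply B_burst_iff_not_A.
    + now apply trapped_step.
Qed.

Lemma trapped_ratio_bounds n : trapped n -> a <= x n / s n <= 1 / b.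
Proof.
  unfold trapped; intros [lo hi].
  destruct rates_bounds as (? & ? & ? & ? & ?); destruct (pos n).
  split.
  - apply Rmult_le_reg_r with (s n); auto.
    unfold Rdiv; rewrite Rmult_assoc, Rinv_l; lra.
  - apply Rmult_le_reg_r with (b * s n); [nra|].
    replace (x n / s n * (b * s n)) with (b * x n) by (field; lra).
    replace (1 / b * (b * s n)) with (s n) by (field; lra).
    exact hi.
Qed.

Lemma trapped_A_burst_then_B n :
  trapped n -> A_burst x s n -> B_burst x s (S n).
Proof.
  unfold trapped, A_burst, B_burst; intros [lo hi] h.
  destruct rates_bounds as (? & ? & ? & ? & ?); destruct (pos n).
  destruct (A_step n h) as [[? ?] ->]; nra.
Qed.

Lemma trapped_two_B_bursts_then_A n :
  trapped n -> B_burst x s n -> B_burst x s (S n) -> A_burst x s (S (S n)).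
Proof.
  unfold trapped, A_burst, B_burst; intros [lo hi] h h'.
  destruct rates as (? & ? & ? & ? & ?); destruct (pos n).
  destruct (B_step n h) as [[? ?] x_eq].
  destruct (B_step (S n) h') as [[? ?] ->].
  rewrite x_eq; nra.
Qed.

Lemma trapped_window n : trapped n ->
  (A_burst x s n \/ A_burst x s (S n) \/ A_burst x s (S (S n))) /\
  (B_burst x s n \/ B_burst x s (S n) \/ B_burst x s (S (S n))).
Proof.
  intro tr; destruct (burst_cases n) as [hA | hB].
  - split; [now left|].
    right; left; now apply trapped_A_burst_then_B.
  - split; [|now left].
    destruct (burst_cases (S n)) as [hA' | hB']; [now right; left|].
    right; right; now apply trapped_two_B_bursts_then_A.
Qed.

Lemma x_plus_s_cv_0 : Un_cv (fun n => x n + s n) 0.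
Proof.
  destruct eventually_trapped as [N trapped_N].
  destruct rates_bounds as (? & ? & ? & ? & ?).
  apply (Un_cv_0_of_eventual_contraction _ B N 3).
  - nra.
  - intro n; destruct (pos n); lra.
  - intro n; pose proof (x_decreasing n); pose proof (s_decreasing n); lra.
  - intros n Nn.
    destruct (trapped_window n (trapped_N n Nn)) as [someA someB].
    assert (x (n + 3)%nat <= A * x n).
    { destruct someA as [h | [h | h]];
        apply (x_contracts_after_A_burst n) with (3 := h); lia. }
    assert (s (n + 3)%nat <= B * s n).
    { destruct someB as [h | [h | h]];
        apply (s_contracts_after_B_burst n) with (3 := h); lia. }
    destruct (pos n); nra.
Qed.

End Bursts.

Theorem lemma6 (x s : nat -> R) :
  burst_dynamics x s ->
  (exists N, forall n, (N <= n)%nat -> mA <= x n / s n <= 1 / mB) /\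
  (* (i) eventually no two consecutive A-bursts: maximal A-runs have length 1 *)
  (exists N, forall n, (N <= n)%nat ->
     A_burst x s n -> ~ A_burst x s (S n)) /\
  (* (ii) eventually no three consecutive B-bursts: maximal B-runs have length <= 2 *)
  (exists N, forall n, (N <= n)%nat ->
     B_burst x s n -> B_burst x s (S n) -> ~ B_burst x s (S (S n))) /\
  (* consequence: every window of 3 consecutive steps has an A- and a B-burst *)
  (exists N, forall n, (N <= n)%nat ->
     (A_burst x s n \/ A_burst x s (S n) \/ A_burst x s (S (S n))) /\
     (B_burst x s n \/ B_burst x s (S n) \/ B_burst x s (S (S n)))) /\
  Un_cv (fun n => x n + s n) 0.
Proof.
  intros (pos & A_step & B_step).
  pose proof paper_rates_admissible as rates.
  destruct (eventually_trapped rates pos A_step B_step) as [N trapped_N].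
  split; [|split; [|split; [|split; [|exact (x_plus_s_cv_0 rates pos A_step B_step)]]]];
    exists N; intros n Nn; specialize (trapped_N n Nn).
  - exact (trapped_ratio_bounds rates pos n trapped_N).
  - intros hA; apply B_burst_iff_not_A.
    exact (trapped_A_burst_then_B rates pos A_step n trapped_N hA).
  - intros hB hB' hB''; apply B_burst_iff_not_A in hB''.
    exact (hB'' (trapped_two_B_bursts_then_A rates pos B_step n trapped_N hB hB')).
  - exact (trapped_window rates pos A_step B_step n trapped_N).
Qed.
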